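(* Let $G$ be an $r$-regular graph and let $0\leq\alpha\leq 1$. (i) Suppose $G$ contains $t$ pairwise vertex-disjoint cliques. Then $S_k(A_{\alpha}(G))\geq \alpha kr+(1-\alpha)(r-k+1)$ for $1\leq k \leq t+1$. (ii) Suppose $G$ contains $c$ pairwise vertex-disjoint induced cycles $C_{g_1}, C_{g_2}, \ldots, C_{g_c}$, each of even length, with lengths $g_1\geq g_2\geq \cdots \geq g_c$. Then $$S_k(A_{\alpha}(G))\geq (\alpha k+1-\alpha)r+2(1-\alpha)\sum_{i=1}^{k-1}\left(1-\frac{4}{g_{i}}\right)$$ for $1\leq k \leq c+1$.
   Context: All graphs are simple and undirected. $A_{\alpha}(G)=\alpha D(G)+(1-\alpha)A(G)$, where $A(G)$ is the adjacency matrix and $D(G)$ the diagonal degree matrix. For a real symmetric matrix $M$ with eigenvalues $\lambda_1(M)\geq\cdots\geq\lambda_n(M)$, $S_k(M)=\sum_{i=1}^k\lambda_i(M)$. A clique of $G$ is a maximal complete subgraph of $G$. $C_g$ denotes a cycle of length $g$. *)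

From HB Require Import structures.
From mathcomp Require Import all_boot all_order all_algebra.
Set Implicit Arguments. Unset Strict Implicit. Unset Printing Implicit Defensive.
Import Order.TTheory GRing.Theory Num.Theory.
Local Open Scope ring_scope.

Definition simple_graph n (adj : rel 'I_n) : Prop :=
  symmetric adj /\ irreflexive adj.

Definition deg n (adj : rel 'I_n) (v : 'I_n) : nat := #|[set w | adj v w]|.

Definition regular n (adj : rel 'I_n) (r : nat) : Prop :=
  forall v, deg adj v = r.

Definition adjmx (R : nzRingType) n (adj : rel 'I_n) : 'M[R]_n :=
  \matrix_(i, j) (adj i j)%:R.
Definition degmx (R : nzRingType) n (adj : rel 'I_n) : 'M[R]_n :=
  \matrix_(i, j) ((i == j)%:R * (deg adj i)%:R).
Definition A_alpha (R : nzRingType) n (adj : rel 'I_n) (a : R) : 'M[R]_n :=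
  a *: degmx R adj + (1 - a) *: adjmx R adj.

(* s is the list of eigenvalues of M, with multiplicity (roots of the
   characteristic polynomial), in non-increasing order. *)
Definition eigen_seq (R : rcfType) n (M : 'M[R]_n) (s : seq R) : Prop :=
  sorted (fun x y : R => y <= x) s /\
  char_poly M = \prod_(x <- s) ('X - x%:P).

Definition Sk (R : rcfType) (s : seq R) (k : nat) : R := \sum_(i < k) s`_i.

Definition complete_set n (adj : rel 'I_n) (K : {set 'I_n}) : Prop :=
  forall u v, u \in K -> v \in K -> u != v -> adj u v.
Definition clique n (adj : rel 'I_n) (K : {set 'I_n}) : Prop :=
  complete_set adj K /\
  forall K' : {set 'I_n}, K \subset K' -> complete_set adj K' -> K' = K.

(* f : 'I_g -> 'I_n lists the vertices of an induced cycle C_g (g >= 3):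
   f injective and f i ~ f j iff j = i +- 1 (mod g). *)
Definition induced_cycle n (adj : rel 'I_n) g (f : 'I_g -> 'I_n) : Prop :=
  (3 <= g)%N /\ injective f /\
  forall i j : 'I_g, adj (f i) (f j) =
    ((val j == (val i).+1 %% g)%N || (val i == (val j).+1 %% g)%N).

From HB Require Import structures.
From mathcomp Require Import all_boot all_order all_algebra.
From mathcomp Require Import complex.
From mathcomp Require Import zify ring lra.
Set Implicit Arguments. Unset Strict Implicit. Unset Printing Implicit Defensive.
Import Order.TTheory GRing.Theory Num.Theory.
Local Open Scope ring_scope.

(* By Ky Fan's maximum principle, S_k(M) of a symmetric matrix M is at least the
   sum of the Rayleigh quotients x^T M x / x^T x of any k pairwise orthogonal
   nonzero vectors x.  It follows from the complex spectral theorem M = P^* D P: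
   k orthonormal rows spread a total weight k over the eigenvalues, each weight
   lying in [0, 1].
   For an r-regular graph, take the all-ones vector (quotient r) together with
   k - 1 vectors of zero sum supported on pairwise disjoint vertex sets, hence
   orthogonal to each other and to the all-ones vector: e_u - e_v on an edge uv
   of each clique (quotient alpha r - (1 - alpha)), or the vector equal to +1 on
   one half of an even induced cycle C_g and -1 on the other half (quotient
   alpha r + 2 (1 - alpha) (1 - 4/g)).  When r > 0, maximality is what forces
   every clique to contain an edge. *)

(* Threshold at c := s_(k-1): sum_i d_i w_i = c k + sum_i (d_i - c) w_i, and
   each (d_i - c) w_i is at most the positive part of d_i - c, which is
   nonzero exactly for the k largest values. *)
Lemma weighted_sum_le_sum_largest (R : realFieldType) n (s : seq R)
    (d w : 'I_n -> R) k :
  sorted (fun x y : R => y <= x) s -> perm_eq s [seq d i | i <- enum 'I_n] ->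
  (0 < k <= n)%N -> (forall i, 0 <= w i <= 1) -> \sum_i w i = k%:R ->
  \sum_i d i * w i <= \sum_(i < k) s`_i.
Proof.
move=> s_sorted s_perm /andP[k_gt0 le_kn] w01 sum_w.
have size_s : size s = n by rewrite (perm_size s_perm) size_map size_enum_ord.
have ge_trans : transitive (fun x y : R => y <= x).
  by move=> y x z le_yx le_zy; exact: le_trans le_zy le_yx.
have s_nth := sorted_leq_nth ge_trans (@lexx _ R) 0 s_sorted.
set c := s`_k.-1.
pose pos (x : R) := if 0 <= x then x else 0.
have dw_le i : (d i - c) * w i <= pos (d i - c).
  have /andP[w0 w1] := w01 i; rewrite /pos; case: (lerP 0 (d i - c)) => h.
    by rewrite ler_piMr.
  by rewrite nmulr_rle0 // ltW.
have sum_pos : \sum_i pos (d i - c) = \sum_(i < k) (s`_i - c).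
  rewrite -big_enum -(big_map d xpredT (fun x => pos (x - c))).
  rewrite -(perm_big _ s_perm) /= (big_nth 0) size_s (big_cat_nat _ le_kn) //=.
  rewrite [X in _ + X]big1_seq ?addr0 ?big_mkord.
    apply: eq_bigr => i _; have lt_ik := ltn_ord i; rewrite /pos ifT // subr_ge0 /c.
    by apply: s_nth; rewrite ?inE ?size_s; lia.
  move=> i /andP[_]; rewrite mem_index_iota => /andP[le_ki lt_in].
  rewrite /pos; case: ifP => // h; apply/eqP; rewrite eq_le h andbT subr_le0.
  by apply: s_nth; rewrite ?inE ?size_s; lia.
have -> : \sum_i d i * w i = \sum_i (d i - c) * w i + c * k%:R.
  by rewrite -sum_w mulr_sumr -big_split /=; apply: eq_bigr => i _; ring.
apply: le_trans (lerD (ler_sum _ (fun i _ => dw_le i)) (lexx _)) _.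
by rewrite sum_pos sumrB sumr_const card_ord mulr_natr subrK.
Qed.

Lemma char_poly_conj (F : fieldType) n (P A : 'M[F]_n) : P \in unitmx ->
  char_poly (invmx P *m A *m P) = char_poly A.
Proof.
move=> P_unit; rewrite /char_poly.
have -> : char_poly_mx (invmx P *m A *m P) =
    map_mx polyC (invmx P) *m char_poly_mx A *m map_mx polyC P.
  rewrite /char_poly_mx !map_mxM mulmxBr mulmxBl; congr (_ - _).
  by rewrite mul_mx_scalar -scalemxAl -mul_scalar_mx -!map_mxM mulVmx // map_mx1 mulmx1.
rewrite !det_mulmx !det_map_mx mulrC mulrA -rmorphM.
by rewrite -det_mulmx mulmxV // det1 rmorph1 mul1r.
Qed.

Lemma char_poly_diag_mx (F : fieldType) n (d : 'rV[F]_n) :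
  char_poly (diag_mx d) = \prod_(i < n) ('X - (d 0 i)%:P).
Proof.
rewrite char_poly_trig ?diag_mx_is_trig //; apply: eq_bigr => i _.
by rewrite mxE eqxx mulr1n.
Qed.

Section KyFan.
Variable R : rcfType.
Local Notation C := R[i].
Local Notation "x %:C" := (real_complex R x) (format "x %:C").
Local Open Scope sesquilinear_scope.

Definition sqnormc (z : C) : R := complex.Re z ^+ 2 + complex.Im z ^+ 2.

Lemma sqnormc_ge0 z : 0 <= sqnormc z.
Proof. by rewrite addr_ge0 ?sqr_ge0. Qed.

Lemma conj_real_complex (x : R) : x%:C^* = x%:C.
Proof. by apply/eqP; rewrite eq_complex /= oppr0 !eqxx. Qed.

Lemma mulc_conj (z : C) : z * z^* = (sqnormc z)%:C.
Proof.
case: z => x y; apply/eqP; rewrite eq_complex /sqnormc /=.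
by apply/andP; split; apply/eqP; ring.
Qed.

Lemma real_mx_trC m n (X : 'M[R]_(m, n)) :
  (map_mx (real_complex R) X)^t* = map_mx (real_complex R) X^T.
Proof. by apply/matrixP => i j; rewrite !mxE conj_real_complex. Qed.

Lemma real_sym_normalmx n (M : 'M[R]_n) : M^T = M ->
  map_mx (real_complex R) M \is normalmx.
Proof. by move=> M_sym; rewrite qualifE real_mx_trC M_sym. Qed.

Lemma spectral_diag_real_sym n (M : 'M[R]_n) s : M^T = M -> eigen_seq M s ->
  perm_eq [seq x%:C | x <- s]
          [seq spectral_diag (map_mx (real_complex R) M) 0 l | l <- enum 'I_n].
Proof.
move=> M_sym [_ M_char]; set Mc := map_mx _ M.
apply: prod_XsubC_eq; rewrite !big_map -enumT big_enum /= -char_poly_diag_mx.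
rewrite -(char_poly_conj _ (spectral_unit Mc)).
rewrite -(orthomx_spectralP (real_sym_normalmx M_sym)).
rewrite -map_char_poly M_char rmorph_prod; apply: eq_bigr => x _.
by rewrite /= map_polyXsubC.
Qed.

Lemma trace_diag_conj k n (Y : 'M[C]_(k, n)) (d : 'rV[C]_n) :
  \tr (Y *m diag_mx d *m Y^t*) = \sum_l d 0 l * (\sum_j sqnormc (Y j l))%:C.
Proof.
rewrite mul_mx_diag /mxtrace; under eq_bigr do rewrite mxE.
rewrite exchange_big /=; apply: eq_bigr => l _.
rewrite rmorph_sum mulr_sumr; apply: eq_bigr => j _.
by rewrite !mxE mulrAC mulc_conj mulrC.
Qed.

Lemma unitarymx_col_sqnorm_sum k n (Y : 'M[C]_(k, n)) : Y \is unitarymx ->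
  \sum_l \sum_j sqnormc (Y j l) = k%:R.
Proof.
move=> /unitarymxP Y_unitary; apply: (@complexI R).
rewrite exchange_big /= rmorph_sum rmorph_nat -mxtrace1 -Y_unitary.
apply: eq_bigr => j _; rewrite rmorph_sum mxE; apply: eq_bigr => l _.
by rewrite !mxE mulc_conj.
Qed.

(* Q := Y^* Y is a Hermitian idempotent, so its diagonal entry
   w = Q_ll = (Q Q)_ll = sum_m |Q_lm|^2 is at least w^2. *)
Lemma unitarymx_col_sqnorm_le1 k n (Y : 'M[C]_(k, n)) l : Y \is unitarymx ->
  \sum_j sqnormc (Y j l) <= 1.
Proof.
move=> /unitarymxP Y_unitary; set w := \sum_j _.
pose Q := Y^t* *m Y.
have Q_idem : Q *m Q = Q by rewrite /Q mulmxA -(mulmxA _ Y) Y_unitary mulmx1.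
have Q_herm m : Q m l = (Q l m)^*.
  rewrite !mxE rmorph_sum; apply: eq_bigr => j _.
  by rewrite !mxE rmorphM /= conjCK mulrC.
have Qll : Q l l = w%:C.
  by rewrite mxE rmorph_sum; apply: eq_bigr => j _; rewrite !mxE mulrC mulc_conj.
have w_sqnorm : w = \sum_m sqnormc (Q l m).
  apply: (@complexI R); rewrite -Qll -{1}Q_idem mxE rmorph_sum.
  by apply: eq_bigr => m _; rewrite Q_herm mulc_conj.
have w_ge0 : 0 <= w by apply: sumr_ge0 => j _; exact: sqnormc_ge0.
have : sqnormc (Q l l) <= w.
  by rewrite w_sqnorm (bigD1 l) //= lerDl sumr_ge0 // => m _; exact: sqnormc_ge0.
rewrite Qll /sqnormc /= expr0n /= addr0; nra.
Qed.

Lemma trace_orthonormal_le_Sk n k (M : 'M[R]_n) s (X : 'M[R]_(k, n)) :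
  M^T = M -> eigen_seq M s -> (0 < k <= n)%N -> X *m X^T = 1%:M ->
  \tr (X *m M *m X^T) <= Sk s k.
Proof.
move=> M_sym M_eig le_kn X_orth.
pose Mc := map_mx (real_complex R) M; pose P := spectralmx Mc.
pose d := spectral_diag Mc.
have d_perm := spectral_diag_real_sym M_sym M_eig.
have d_real l : d 0 l = (complex.Re (d 0 l))%:C.
  have : d 0 l \in [seq x%:C | x <- s] by rewrite (perm_mem d_perm) map_f ?mem_enum.
  by case/mapP => x _ ->.
have s_perm : perm_eq s [seq complex.Re (d 0 l) | l <- enum 'I_n].
  apply: (perm_map_inj (@complexI R)); rewrite -map_comp.
  by rewrite (eq_map (g := fun l => d 0 l)) // => l /=; rewrite -d_real.
pose Y := map_mx (real_complex R) X *m P^t*.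
have Y_unitary : Y \is unitarymx.
  apply: mul_unitarymx; last by rewrite trmxC_unitary spectral_unitarymx.
  by apply/unitarymxP; rewrite real_mx_trC -map_mxM X_orth map_mx1.
have tr_eq : (\tr (X *m M *m X^T))%:C = \tr (Y *m diag_mx d *m Y^t*).
  have Mc_eq : Mc = P^t* *m diag_mx d *m P.
    rewrite -(invmx_unitary (spectral_unitarymx Mc)).
    exact: orthomx_spectralP (real_sym_normalmx M_sym).
  rewrite -trace_map_mx !map_mxM -[map_mx _ M]/Mc Mc_eq /Y trmx_mul map_mxM trmxCK.
  by rewrite real_mx_trC !mulmxA.
suff -> : \tr (X *m M *m X^T) =
    \sum_l complex.Re (d 0 l) * \sum_j sqnormc (Y j l).
  apply: weighted_sum_le_sum_largest (proj1 M_eig) s_perm le_kn _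
    (unitarymx_col_sqnorm_sum Y_unitary) => l.
  by rewrite sumr_ge0 ?unitarymx_col_sqnorm_le1 // => j _; exact: sqnormc_ge0.
apply: (@complexI R); rewrite tr_eq trace_diag_conj rmorph_sum.
by apply: eq_bigr => l _; rewrite rmorphM /= -d_real.
Qed.

End KyFan.

Definition rayleigh (R : fieldType) n (M : 'M[R]_n) (x : 'I_n -> R) : R :=
  (\sum_u \sum_v x u * M u v * x v) / \sum_u x u ^+ 2.

Lemma sum_rayleigh_le_Sk (R : rcfType) n k (M : 'M[R]_n) s
    (f : 'I_k -> 'I_n -> R) :
  M^T = M -> eigen_seq M s -> (0 < k <= n)%N ->
  (forall j j', j != j' -> \sum_u f j u * f j' u = 0) ->
  (forall j, 0 < \sum_u f j u ^+ 2) ->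
  \sum_j rayleigh M (f j) <= Sk s k.
Proof.
move=> M_sym M_eig le_kn f_orth f_pos.
pose nrm j := Num.sqrt (\sum_u f j u ^+ 2).
have nrm_sq j : nrm j ^+ 2 = \sum_u f j u ^+ 2 by rewrite sqr_sqrtr // ltW.
have nrm_neq0 j : nrm j != 0 by rewrite sqrtr_eq0 -ltNge.
pose X := \matrix_(j, u) (f j u / nrm j).
have X_orth : X *m X^T = 1%:M.
  apply/matrixP => j j'; rewrite !mxE; under eq_bigr do rewrite !mxE mulf_div.
  rewrite -mulr_suml; case: eqP => [<- | /eqP ne]; last by rewrite f_orth // mul0r.
  under eq_bigr do rewrite -expr2.
  by rewrite -expr2 nrm_sq divff // gt_eqF.
have -> : \sum_j rayleigh M (f j) = \tr (X *m M *m X^T).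
  apply: eq_bigr => j _; rewrite /rayleigh -nrm_sq mxE.
  under [RHS]eq_bigr do rewrite !mxE mulr_suml.
  rewrite exchange_big mulr_suml; apply: eq_bigr => u _.
  rewrite mulr_suml; apply: eq_bigr => v _; rewrite !mxE.
  by field; rewrite nrm_neq0.
exact: trace_orthonormal_le_Sk.
Qed.

Lemma sum_delta_mul (R : pzSemiRingType) (I : finType) (a : I) (F : I -> R) :
  \sum_i (i == a)%:R * F i = F a.
Proof.
rewrite (bigD1 a) //= eqxx mul1r big1 ?addr0 // => i /negbTE ->.
by rewrite mul0r.
Qed.

Section PushVec.
Variables (R : comNzRingType) (n : nat).

Definition pushvec m (phi : 'I_m -> 'I_n) (c : 'I_m -> R) : 'I_n -> R :=
  fun u => \sum_y (u == phi y)%:R * c y.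

Lemma pushvec_dot m (phi : 'I_m -> 'I_n) c (z : 'I_n -> R) :
  \sum_u pushvec phi c u * z u = \sum_y c y * z (phi y).
Proof.
under eq_bigr do rewrite mulr_suml.
rewrite exchange_big /=; apply: eq_bigr => y _.
rewrite -(sum_delta_mul (phi y) (fun u => c y * z u)).
by apply: eq_bigr => u _; rewrite mulrA.
Qed.

Lemma pushvec_sum m (phi : 'I_m -> 'I_n) c : \sum_u pushvec phi c u = \sum_y c y.
Proof.
under eq_bigr do rewrite -[pushvec _ _ _]mulr1.
by rewrite pushvec_dot; under eq_bigr do rewrite mulr1.
Qed.

Lemma pushvec_at m (phi : 'I_m -> 'I_n) c y : injective phi ->
  pushvec phi c (phi y) = c y.
Proof.
move=> phi_inj; rewrite /pushvec.
by under eq_bigr do rewrite (inj_eq phi_inj) eq_sym; exact: sum_delta_mul.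
Qed.

Lemma pushvec_sqsum m (phi : 'I_m -> 'I_n) c : injective phi ->
  \sum_u pushvec phi c u ^+ 2 = \sum_y c y ^+ 2.
Proof.
move=> phi_inj; under eq_bigr do rewrite expr2.
by rewrite pushvec_dot; apply: eq_bigr => y _; rewrite pushvec_at.
Qed.

Lemma pushvec_orth m m' (phi : 'I_m -> 'I_n) c (phi' : 'I_m' -> 'I_n) c' :
  (forall y y', phi y != phi' y') ->
  \sum_u pushvec phi c u * pushvec phi' c' u = 0.
Proof.
move=> phi_disj; rewrite pushvec_dot big1 // => y _.
by rewrite /pushvec big1 ?mulr0 // => y' _; rewrite (negbTE (phi_disj y y')) mul0r.
Qed.

Lemma pushvec_form m (phi : 'I_m -> 'I_n) c (A : 'I_n -> 'I_n -> R) :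
  \sum_u \sum_v pushvec phi c u * A u v * pushvec phi c v =
  \sum_y \sum_y' c y * A (phi y) (phi y') * c y'.
Proof.
transitivity (\sum_u pushvec phi c u * \sum_v pushvec phi c v * A u v).
  by apply: eq_bigr => u _; rewrite mulr_sumr; apply: eq_bigr => v _; ring.
rewrite pushvec_dot; apply: eq_bigr => y _; rewrite pushvec_dot mulr_sumr.
by apply: eq_bigr => y' _; ring.
Qed.

End PushVec.

Section AlphaRegular.
Variables (R : numFieldType) (n : nat) (adj : rel 'I_n) (r : nat) (a : R).
Hypotheses (adj_simple : simple_graph adj) (adj_regular : regular adj r).

Lemma A_alpha_sym : (A_alpha adj a)^T = A_alpha adj a.
Proof.
case: adj_simple => adj_sym _; apply/matrixP => u v.
by rewrite !mxE adj_sym eq_sym; case: eqP => [->|]; rewrite ?mul0r.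
Qed.

Lemma sum_adj_regular u : \sum_v ((adj u v)%:R : R) = r%:R.
Proof.
rewrite -(adj_regular u) /deg -sum1_card natr_sum [RHS]big_mkcond /=.
by apply: eq_bigr => v _; rewrite inE; case: (adj u v).
Qed.

Lemma A_alpha_form (x : 'I_n -> R) :
  \sum_u \sum_v x u * A_alpha adj a u v * x v =
  a * r%:R * \sum_u x u ^+ 2 + (1 - a) * \sum_u \sum_v x u * (adj u v)%:R * x v.
Proof.
rewrite !mulr_sumr -big_split /=; apply: eq_bigr => u _.
rewrite expr2 -(sum_delta_mul u (fun v => a * r%:R * (x u * x v))).
rewrite mulr_sumr -big_split /=; apply: eq_bigr => v _.
by rewrite !mxE adj_regular eq_sym; ring.
Qed.

Lemma rayleigh_A_alpha_const : (0 < n)%N ->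
  rayleigh (A_alpha adj a) (fun _ => 1) = r%:R.
Proof.
move=> n_gt0; rewrite /rayleigh A_alpha_form.
under [X in _ * _ + _ * X]eq_bigr do under eq_bigr do rewrite mulr1 mul1r.
under eq_bigr do rewrite sum_adj_regular.
have n_neq0 : n%:R != 0 :> R by rewrite pnatr_eq0 -lt0n.
by rewrite !sumr_const card_ord expr1n -[_ *+ n]mulr_natr; field.
Qed.

Lemma rayleigh_A_alpha_pushvec m (phi : 'I_m -> 'I_n) c :
  injective phi -> \sum_y c y ^+ 2 != 0 ->
  rayleigh (A_alpha adj a) (pushvec phi c) =
  a * r%:R + (1 - a) * rayleigh (adjmx R (relpre phi adj)) c.
Proof.
move=> phi_inj c_neq0; rewrite /rayleigh A_alpha_form !pushvec_sqsum //.
rewrite (pushvec_form _ _ (fun u v => (adj u v)%:R)).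
under [X in _ = _ + _ * (X / _)]eq_bigr do under eq_bigr do rewrite mxE.
by field.
Qed.

End AlphaRegular.

Lemma tnth_pair_inj (T : eqType) (u v : T) : u != v -> injective (tnth [tuple u; v]).
Proof.
move=> neq_uv y y'; rewrite !(tnth_nth u).
case: y y' => [[|[|y]] ly] [[|[|y']] ly'] //= e; try exact: val_inj.
all: by move: neq_uv; rewrite e eqxx.
Qed.

Lemma rayleigh_adjmx_edge (R : numFieldType) n (adj : rel 'I_n) u v :
  simple_graph adj -> adj u v ->
  rayleigh (adjmx R (relpre (tnth [tuple u; v]) adj)) (tnth [tuple 1; -1]) = -1.
Proof.
move=> [adj_sym adj_irr] adj_uv.
rewrite /rayleigh !big_ord_recl !big_ord0 !mxE /= !(tnth_nth u) !(tnth_nth 0) /=.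
rewrite !adj_irr [adj v u]adj_sym adj_uv /=.
have two_neq0 : 2 != 0 :> R by rewrite pnatr_eq0.
by field.
Qed.

Lemma ordS_val g (y : 'I_g) : nat_of_ord (ordS y) = if (y.+1 < g)%N then y.+1 else 0%N.
Proof.
rewrite /=; case: ltnP => [lt_y1g | le_gy1]; first exact: modn_small.
have -> : y.+1 = g by apply/eqP; rewrite eqn_leq ltn_ord le_gy1.
exact: modnn.
Qed.

Lemma ordS2_neq g (y : 'I_g) : (2 < g)%N -> ordS (ordS y) != y.
Proof.
move=> g_gt2; apply/negP => /eqP /(congr1 (@nat_of_ord g)); rewrite !ordS_val.
by have := ltn_ord y; case: (ltnP y.+1 g) => /= ?; case: ifP => ?; lia.
Qed.

Section EvenCycle.
Variable R : numFieldType.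

Definition half_sign (h m : nat) : R := if (m < h)%N then 1 else -1.

Lemma sum_half_sign h : \sum_(0 <= m < h.*2) half_sign h m = 0.
Proof.
rewrite -addnn (big_cat_nat _ (leq_addr h h)) //=.
rewrite (eq_big_nat _ _ (F2 := fun _ => 1)) => [|m /andP[_ lt_mh]]; last first.
  by rewrite /half_sign lt_mh.
rewrite [X in _ + X](eq_big_nat _ _ (F2 := fun _ => -1)) => [|m /andP[le_hm _]].
  by rewrite !sumr_const_nat addnK subn0 -mulrnDl addrN mul0rn.
by rewrite /half_sign ltnNge le_hm.
Qed.

Lemma half_sign_sq h m : half_sign h m ^+ 2 = 1.
Proof. by rewrite /half_sign; case: ifP; rewrite ?sqrrN expr1n. Qed.

Lemma half_sign_shift h m : (0 < h)%N -> (m < h.*2)%N ->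
  half_sign h m * half_sign h (m.+1 %% h.*2) =
  1 - 2 * (m.+1 == h)%:R - 2 * (m.+1 == h.*2)%:R.
Proof.
move=> h_gt0 lt_m2h; rewrite /half_sign.
have [lt_m1 | eq_m1] : (m.+1 < h.*2)%N \/ m.+1 = h.*2 by lia.
  rewrite modn_small // (ltn_eqF lt_m1).
  by case: (ltnP m h); case: (ltnP m.+1 h); case: eqP => /=; try lia; move=> *; ring.
have le_hm : (h <= m)%N by lia.
rewrite ltnNge le_hm eq_m1 modnn eqxx h_gt0.
by case: eqP => /=; try lia; move=> *; ring.
Qed.

Lemma sum_ord_succ_eq n j : (0 < j <= n)%N ->
  \sum_(m < n) ((m.+1 == j)%:R : R) = 1.
Proof.
move=> /andP[j_gt0 le_jn].
transitivity (\sum_(m < n | m == j.-1 :> nat) (1 : R)).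
  rewrite [RHS]big_mkcond; apply: eq_bigr => m _.
  by rewrite -[j in _ == j](prednK j_gt0) eqSS; case: eqP.
by rewrite (big_ord1_eq _ (fun _ => 1)) ifT //; lia.
Qed.

(* Around the cycle the sign changes exactly twice, after h - 1 and 2h - 1. *)
Lemma sum_half_sign_shift h : (0 < h)%N ->
  \sum_(m < h.*2) half_sign h m * half_sign h (m.+1 %% h.*2) = (h.*2)%:R - 4.
Proof.
move=> h_gt0; have le_h2h : (h <= h.*2)%N by rewrite -addnn leq_addr.
under eq_bigr => m _ do rewrite (half_sign_shift h_gt0 (ltn_ord m)).
rewrite !sumrB sumr_const card_ord -!mulr_sumr !sum_ord_succ_eq ?h_gt0 ?leqnn //.
  by rewrite mulr1; ring.
by rewrite (leq_trans h_gt0).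
Qed.

Definition cycle_sign g : 'I_g -> R := fun y => half_sign g./2 y.
#[global] Arguments cycle_sign : clear implicits.

Lemma sum_cycle_sign g : ~~ odd g -> \sum_y cycle_sign g y = 0.
Proof.
move=> g_even; rewrite /cycle_sign -(big_mkord xpredT (half_sign g./2)).
have {1}-> : g = g./2.*2 by rewrite -[LHS](odd_double_half g) (negbTE g_even).
exact: sum_half_sign.
Qed.

Lemma sum_cycle_sign_sq g : \sum_y cycle_sign g y ^+ 2 = g%:R.
Proof. by under eq_bigr do rewrite half_sign_sq; rewrite sumr_const card_ord. Qed.

Lemma rayleigh_even_cycle g (e : rel 'I_g) : (2 < g)%N -> ~~ odd g ->
  (forall y y', e y y' = (y' == ordS y) || (y == ordS y')) ->
  rayleigh (adjmx R e) (cycle_sign g) = 2 * (1 - 4 / g%:R).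
Proof.
move=> g_gt2 g_even e_cycle.
have [h g_eq] : exists h, g = h.*2.
  by exists g./2; rewrite -[LHS](odd_double_half g) (negbTE g_even).
subst g; have h_gt0 : (0 < h)%N by lia.
have e_split y y' : (e y y')%:R = (y' == ordS y)%:R + (y == ordS y')%:R :> R.
  rewrite e_cycle; case: (eqVneq y' (ordS y)) => [-> | ne]; last first.
    by rewrite /= add0r.
  by rewrite [y == _]eq_sym (negbTE (ordS2_neq y g_gt2)) /= addr0.
set c := cycle_sign h.*2.
have shift_sum : \sum_y c y * c (ordS y) = (h.*2)%:R - 4.
  by rewrite /c /cycle_sign doubleK -sum_half_sign_shift.
have shift_l y : \sum_y' c y * (y' == ordS y)%:R * c y' = c y * c (ordS y).
  rewrite -[RHS](sum_delta_mul (ordS y) (fun y' => c y * c y')).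
  by apply: eq_bigr => y' _; ring.
have shift_r y' : \sum_y c y * (y == ordS y')%:R * c y' = c (ordS y') * c y'.
  rewrite -[RHS](sum_delta_mul (ordS y') (fun y => c y * c y')).
  by apply: eq_bigr => y _; ring.
rewrite /rayleigh sum_cycle_sign_sq.
under eq_bigr do under eq_bigr do rewrite mxE e_split mulrDr mulrDl.
under eq_bigr do rewrite big_split /= shift_l.
rewrite big_split /= exchange_big /=.
have -> : \sum_y' \sum_y c y * (y == ordS y')%:R * c y' = \sum_y c y * c (ordS y).
  by apply: eq_bigr => y' _; rewrite shift_r mulrC.
have h2_neq0 : (h.*2)%:R != 0 :> R by rewrite pnatr_eq0 -lt0n; lia.
by rewrite shift_sum; field.
Qed.

End EvenCycle.

Section SkBounds.
Variables (R : rcfType) (n : nat) (adj : rel 'I_n) (r : nat) (a : R).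
Hypotheses (adj_simple : simple_graph adj) (adj_regular : regular adj r).

Lemma Sk_A_alpha_ge_diag k s : (0 < k <= n)%N -> eigen_seq (A_alpha adj a) s ->
  k%:R * (a * r%:R) <= Sk s k.
Proof.
move=> k_range A_eig; have /andP[_ le_kn] := k_range.
pose vertex (j : 'I_k) (_ : 'I_1) := widen_ord le_kn j.
have vertex_inj j : injective (vertex j) by move=> y y' _; rewrite !ord1.
pose f j := pushvec (vertex j) (fun _ => 1 : R).
have f_orth j j' : j != j' -> \sum_u f j u * f j' u = 0.
  move=> neq_jj'; apply: pushvec_orth => y y'.
  by apply: contra neq_jj' => /eqP /(congr1 val) /= /val_inj ->.
have f_pos j : 0 < \sum_u f j u ^+ 2 by rewrite pushvec_sqsum // big_ord1 expr1n.
have := sum_rayleigh_le_Sk (A_alpha_sym a adj_simple) A_eig k_range f_orth f_pos.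
apply: le_trans.
have loop0 j : rayleigh (adjmx R (relpre (vertex j) adj)) (fun _ => 1) = 0.
  by rewrite /rayleigh !big_ord1 mxE /= (proj2 adj_simple) !(mulr0, mul0r).
under eq_bigr do
  rewrite (rayleigh_A_alpha_pushvec a adj_regular) ?big_ord1 ?expr1n ?oner_eq0 //.
under eq_bigr do rewrite loop0 mulr0 addr0.
by rewrite sumr_const card_ord mulr_natl.
Qed.

Lemma Sk_A_alpha_ge_disjoint_supports k s (m : 'I_k -> nat)
    (phi : forall j, 'I_(m j) -> 'I_n) (x : forall j, 'I_(m j) -> R) :
  (k < n)%N -> eigen_seq (A_alpha adj a) s ->
  (forall j, injective (phi j)) ->
  (forall j j' y y', j != j' -> phi j y != phi j' y') ->
  (forall j, \sum_y x j y = 0) -> (forall j, 0 < \sum_y x j y ^+ 2) ->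
  r%:R + \sum_j (a * r%:R + (1 - a) * rayleigh (adjmx R (relpre (phi j) adj)) (x j))
    <= Sk s k.+1.
Proof.
move=> lt_kn A_eig phi_inj phi_disj x_sum0 x_pos.
pose f (j : 'I_k.+1) : 'I_n -> R :=
  if unlift ord0 j is Some j' then pushvec (phi j') (x j') else fun _ => 1.
have f0 : f ord0 = fun _ => 1 by rewrite /f unlift_none.
have fS j : f (lift ord0 j) = pushvec (phi j) (x j) by rewrite /f liftK.
have f_orth j j' : j != j' -> \sum_u f j u * f j' u = 0.
  case: (unliftP ord0 j) => [j1 ->|->]; case: (unliftP ord0 j') => [j1' ->|->] //.
  - rewrite (inj_eq lift_inj) !fS => neq_j1; apply: pushvec_orth => y y'.
    exact: phi_disj.
  - by move=> _; rewrite fS f0; under eq_bigr do rewrite mulr1; rewrite pushvec_sum.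
  - by move=> _; rewrite fS f0; under eq_bigr do rewrite mul1r; rewrite pushvec_sum.
have f_pos j : 0 < \sum_u f j u ^+ 2.
  case: (unliftP ord0 j) => [j1 ->|->]; first by rewrite fS pushvec_sqsum.
  by rewrite f0 sumr_const card_ord expr1n ltr0n; lia.
have n_gt0 : (0 < n)%N by lia.
have := sum_rayleigh_le_Sk (k := k.+1) (A_alpha_sym a adj_simple) A_eig lt_kn
  f_orth f_pos.
apply: le_trans.
rewrite big_ord_recl f0 (rayleigh_A_alpha_const a adj_regular n_gt0) lerD2l.
by under [X in _ <= X]eq_bigr do
  rewrite fS (rayleigh_A_alpha_pushvec a adj_regular) ?gt_eqF //.
Qed.

Lemma Sk_A_alpha_ge_matching k s (e : 'I_k -> 'I_n * 'I_n) :
  (k < n)%N -> eigen_seq (A_alpha adj a) s -> (forall j, adj (e j).1 (e j).2) ->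
  (forall j j', j != j' ->
     [disjoint [set (e j).1; (e j).2] & [set (e j').1; (e j').2]]) ->
  r%:R + k%:R * (a * r%:R - (1 - a)) <= Sk s k.+1.
Proof.
move=> lt_kn A_eig e_adj e_disj.
pose phi j := tnth [tuple (e j).1; (e j).2].
have phi_mem j y : phi j y \in [set (e j).1; (e j).2].
  by have := mem_tnth y [tuple (e j).1; (e j).2]; rewrite !inE.
have phi_inj j : injective (phi j).
  apply: tnth_pair_inj; apply: contraTneq (e_adj j) => ->.
  by rewrite (proj2 adj_simple).
have phi_disj j j' y y' : j != j' -> phi j y != phi j' y'.
  move=> neq_jj'; apply: contraTneq (phi_mem j' y') => <-.
  by rewrite (disjointFr (e_disj _ _ neq_jj') (phi_mem j y)).
have pm1_sum : \sum_(y < 2) tnth [tuple 1; -1] y = 0 :> R.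
  by rewrite !big_ord_recl big_ord0 !(tnth_nth 0) /= addr0 subrr.
have pm1_pos : 0 < \sum_(y < 2) tnth [tuple 1; -1] y ^+ 2 :> R.
  by rewrite !big_ord_recl big_ord0 !(tnth_nth 0) /= sqrrN expr1n addr0 addr_gt0 ?ltr01.
have := Sk_A_alpha_ge_disjoint_supports (m := fun _ => 2)
  (x := fun _ => tnth [tuple 1; -1]) lt_kn A_eig phi_inj phi_disj
  (fun _ => pm1_sum) (fun _ => pm1_pos).
apply: le_trans.
have edge_rq j : rayleigh (adjmx R (relpre (phi j) adj)) (tnth [tuple 1; -1]) = -1.
  exact: rayleigh_adjmx_edge.
under eq_bigr do rewrite edge_rq.
by rewrite sumr_const card_ord -mulr_natl; lra.
Qed.

End SkBounds.

Lemma complete_set1 n (adj : rel 'I_n) w : complete_set adj [set w].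
Proof. by move=> u v; rewrite !inE => /eqP-> /eqP->; rewrite eqxx. Qed.

Lemma complete_set2 n (adj : rel 'I_n) u w :
  symmetric adj -> adj u w -> complete_set adj [set u; w].
Proof.
move=> adj_sym adj_uw x y; rewrite !inE.
by move=> /orP[] /eqP-> /orP[] /eqP->; rewrite ?eqxx // => _; rewrite adj_sym.
Qed.

(* A maximal clique K containing u cannot be {u}: adding a neighbour of u
   (one exists as r > 0) would enlarge it. *)
Lemma clique_has_edge n (adj : rel 'I_n) r (K : {set 'I_n}) :
  simple_graph adj -> regular adj r -> (0 < r)%N -> (0 < n)%N -> clique adj K ->
  exists u v, [/\ u \in K, v \in K & adj u v].
Proof.
move=> [adj_sym adj_irr] adj_reg r_gt0 n_gt0 [K_complete K_max].
have [u uK] : exists u, u \in K.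
  apply/set0Pn/negP => /eqP K0; pose w := Ordinal n_gt0.
  have := K_max [set w]; rewrite K0 sub0set => /(_ isT (@complete_set1 n adj w)).
  by move/setP/(_ w); rewrite !inE eqxx.
have [w adj_uw] : exists w, adj u w.
  have /card_gt0P[w] : (0 < deg adj u)%N by rewrite adj_reg.
  by rewrite inE; exists w.
case: (pickP [pred v in K | v != u]) => [v /andP[vK neq_vu] | K_u].
  by exists u, v; split; rewrite ?K_complete // eq_sym.
have sub_uw : K \subset [set u; w].
  apply/subsetP => x xK; have := K_u x; rewrite /= xK /= => /negbFE/eqP ->.
  by rewrite !inE eqxx.
have /setP/(_ w) := K_max _ sub_uw (complete_set2 adj_sym adj_uw).
rewrite !inE eqxx orbT => /esym wK; have := K_u w; rewrite /= wK /= => /negbFE/eqP wu.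
by move: adj_uw; rewrite wu adj_irr.
Qed.

Lemma Sk_A_alpha_ge_cliques (R : rcfType) n (adj : rel 'I_n) r (a : R) t
    (K : 'I_t -> {set 'I_n}) k s :
  simple_graph adj -> regular adj r -> 0 <= a <= 1 ->
  (forall i, clique adj (K i)) -> (forall i j, i != j -> [disjoint K i & K j]) ->
  (0 < k <= t.+1)%N -> (k <= n)%N -> eigen_seq (A_alpha adj a) s ->
  a * k%:R * r%:R + (1 - a) * (r%:R - k%:R + 1) <= Sk s k.
Proof.
move=> adj_simple adj_reg /andP[a_ge0 a_le1] K_clique K_disj.
case: k => [|k] // /andP[_]; rewrite ltnS => le_kt lt_kn A_eig.
have k_ge0 : 0 <= k%:R :> R := ler0n _ _.
have [r0 | r_gt0] := posnP r.
  (* no edges: the diagonal bound 0 suffices, as (1 - a) (1 - k) <= 0 *)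
  have := Sk_A_alpha_ge_diag adj_simple adj_reg (k := k.+1) lt_kn A_eig.
  by rewrite r0 -natr1; apply: le_trans; nra.
have edge_in i : exists e : 'I_n * 'I_n, [set e.1; e.2] \subset K i /\ adj e.1 e.2.
  have [|u [v [uK vK adj_uv]]] :=
    clique_has_edge adj_simple adj_reg r_gt0 _ (K_clique i).
    exact: leq_trans lt_kn.
  by exists (u, v); rewrite subUset !sub1set uK vK.
have [e e_edge] := fin_all_exists edge_in.
pose w := widen_ord le_kt.
have w_inj : injective w by move=> j j' /(congr1 val) /= /val_inj.
have e_adj j : adj (e (w j)).1 (e (w j)).2 by case: (e_edge (w j)).
have e_disj j j' : j != j' ->
    [disjoint [set (e (w j)).1; (e (w j)).2] & [set (e (w j')).1; (e (w j')).2]].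
  move=> neq_jj'; apply: disjointW (K_disj (w j) (w j') _).
  - by case: (e_edge (w j)).
  - by case: (e_edge (w j')).
  - by rewrite (inj_eq w_inj).
have := Sk_A_alpha_ge_matching adj_simple adj_reg lt_kn A_eig e_adj e_disj.
apply: le_trans.
by rewrite -natr1; lra.
Qed.

Lemma Sk_A_alpha_ge_even_cycles (R : rcfType) n (adj : rel 'I_n) r (a : R) c
    (g : 'I_c -> nat) (C : forall i, 'I_(g i) -> 'I_n) k s :
  simple_graph adj -> regular adj r ->
  (forall i, induced_cycle adj (C i)) -> (forall i, ~~ odd (g i)) ->
  (forall i j x y, i != j -> C i x != C j y) ->
  (0 < k <= c.+1)%N -> (k <= n)%N -> eigen_seq (A_alpha adj a) s ->
  (a * k%:R + 1 - a) * r%:R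
    + 2 * (1 - a) * \sum_(i < c | (i < k.-1)%N) (1 - 4 / (g i)%:R) <= Sk s k.
Proof.
move=> adj_simple adj_reg C_cycle g_even C_disj.
case: k => [|k] // /andP[_]; rewrite ltnS => le_kc lt_kn A_eig.
pose w := widen_ord le_kc.
have w_inj : injective w by move=> j j' /(congr1 val) /= /val_inj.
have C_inj j : injective (C (w j)) by case: (C_cycle (w j)) => _ [].
have C_disj' j j' y y' : j != j' -> C (w j) y != C (w j') y'.
  by move=> neq_jj'; apply: C_disj; rewrite (inj_eq w_inj).
have sign_sum0 j : \sum_y cycle_sign R (g (w j)) y = 0 by apply: sum_cycle_sign.
have sign_pos j : 0 < \sum_y cycle_sign R (g (w j)) y ^+ 2.
  by rewrite sum_cycle_sign_sq ltr0n; case: (C_cycle (w j)) => /ltnW/ltnW.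
have := Sk_A_alpha_ge_disjoint_supports adj_simple adj_reg
  (x := fun j => cycle_sign R (g (w j))) lt_kn A_eig C_inj C_disj' sign_sum0 sign_pos.
have cycle_rq j : rayleigh (adjmx R (relpre (C (w j)) adj)) (cycle_sign R (g (w j)))
    = 2 * (1 - 4 / (g (w j))%:R).
  have [g_gt2 [_ C_adj]] := C_cycle (w j).
  exact: rayleigh_even_cycle.
under eq_bigr do rewrite cycle_rq.
rewrite big_split /= sumr_const card_ord -[_ *+ k]mulr_natr -!mulr_sumr.
rewrite (big_ord_narrow le_kc) -/w -natr1; apply: le_trans; lra.
Qed.

Theorem theorem5p2 (R : rcfType) (n : nat) (adj : rel 'I_n) (r : nat) (a : R) :
  simple_graph adj -> regular adj r -> 0 <= a <= 1 ->
  (* (i) *)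
  (forall (t : nat) (K : 'I_t -> {set 'I_n}),
     (forall i, clique adj (K i)) ->
     (forall i j, i != j -> [disjoint K i & K j]) ->
     forall (k : nat) (s : seq R), (1 <= k <= t.+1)%N -> (k <= n)%N ->
       eigen_seq (A_alpha adj a) s ->
       a * k%:R * r%:R + (1 - a) * (r%:R - k%:R + 1) <= Sk s k)
  /\
  (* (ii) *)
  (forall (c : nat) (g : 'I_c -> nat) (C : forall i : 'I_c, 'I_(g i) -> 'I_n),
     (forall i, induced_cycle adj (C i)) ->
     (forall i, ~~ odd (g i)) ->
     (forall i j : 'I_c, (i <= j)%N -> (g j <= g i)%N) ->
     (forall (i j : 'I_c) (x : 'I_(g i)) (y : 'I_(g j)), i != j -> C i x != C j y) ->
     forall (k : nat) (s : seq R), (1 <= k <= c.+1)%N -> (k <= n)%N ->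
       eigen_seq (A_alpha adj a) s ->
       (a * k%:R + 1 - a) * r%:R
         + 2 * (1 - a) * \sum_(i < c | (i < k.-1)%N) (1 - 4 / (g i)%:R)
       <= Sk s k).
Proof.
move=> adj_simple adj_reg a01; split.
  move=> t K K_clique K_disj k s; exact: Sk_A_alpha_ge_cliques.
move=> c g C C_cycle g_even _ C_disj k s; exact: Sk_A_alpha_ge_even_cycles.
Qed.
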